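(* Let $\widehat{\boldsymbol f}=(\widehat f_1,\dots,\widehat f_{H-1},\widehat f_H=r_H)$ be functions $\mathcal S\times\mathcal A\to\mathbb R$ and let $\widehat\pi$ be the greedy policy induced by $\widehat{\boldsymbol f}$. For a policy $\pi$ define $$\Delta_h(\pi;s,a)=\sum_{h'=h}^{H-1}\big(\mathcal P^\pi_{h\to h'}(\mathcal T^\star_{h'}\widehat f_{h'+1}-\widehat f_{h'})\big)(s,a).$$ Then for every policy $\pi$, $$J(\pi)-J(\widehat\pi)\le\sum_{h=1}^{H-1}\mathbb E_{\widehat\pi}\big[\Delta_h(\pi;S_h,\pi_h(S_h))-\Delta_h(\pi;S_h,\widehat\pi_h(S_h))\big].$$
   Context: Finite-horizon MDP with horizon $H\ge2$, state space $\mathcal S$, action space $\mathcal A$, transition kernels $P_h(\cdot\mid s,a)$ ($h=1,\dots,H-1$), known reward functions $r_h$ ($h=1,\dots,H$), initial distribution $\nu_1$. A policy $\pi=(\pi_1,\dots,\pi_H)$ assigns distributions $\pi_h(\cdot\mid s)$ on $\mathcal A$; $J(\pi)=\mathbb E_{\nu_1,\pi}[\sum_{h=1}^H r_h(S_h,A_h)]$ with $S_1\sim\nu_1$, $A_h\sim\pi_h(\cdot\mid S_h)$, $S_{h+1}\sim P_h(\cdot\mid S_h,A_h)$; $\mathbb E_\pi$ is expectation over this process. For $f:\mathcal S\times\mathcal A\to\mathbb R$, $f(s,\pi_h(s)):=\int f(s,a)\pi_h(da\mid s)$. $(\mathcal P^\pi_h f)(s,a):=\int f(s',\pi_{h+1}(s'))P_h(ds'\mid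 s,a)$ and $\mathcal P^\pi_{h\to h'}=\mathcal P^\pi_h\cdots\mathcal P^\pi_{h'-1}$ for $h<h'$, identity for $h=h'$. $(\mathcal T^\star_h f)(s,a)=r_h(s,a)+\mathbb E[\max_{a'}f(S',a')]$, $S'\sim P_h(\cdot\mid s,a)$. The greedy policy of $\widehat{\boldsymbol f}$ satisfies $\widehat\pi_h(s)\in\arg\max_a\widehat f_h(s,a)$. All expectations are assumed finite. *)

From HB Require Import structures.
From mathcomp Require Import all_boot all_order all_algebra.
From mathcomp Require Import all_classical all_reals all_analysis.
Set Implicit Arguments. Unset Strict Implicit. Unset Printing Implicit Defensive.
Import Order.TTheory GRing.Theory Num.Theory.
Local Open Scope classical_set_scope.
Local Open Scope ring_scope.

Section MDP.
Context (R : realType) (d1 d2 : measure_display)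
        (S : measurableType d1) (A : measurableType d2).

Definition transitions := nat -> R.-pker (S * A)%type ~> S.
Definition policy := nat -> R.-pker S ~> A.

Variables (P : transitions) (nu : probability S R).

(* f(s, pi_h(s)) := \int f(s,a) pi_h(da | s), for a kernel rho = pi_h *)
Definition polE (rho : R.-pker S ~> A) (f : S -> A -> R) (s : S) : R :=
  Rintegral (rho s) setT (f s).

Definition Pop (pi : policy) (h : nat) (f : S -> A -> R) : S -> A -> R :=
  fun s a => Rintegral (P h (s, a)) setT (polE (pi h.+1) f).

Fixpoint PchainN (pi : policy) (h k : nat) (f : S -> A -> R) : S -> A -> R :=
  match k with
  | 0 => f
  | k'.+1 => Pop pi h (PchainN pi h.+1 k' f)
  end.

(* P^pi_{h -> h'} (identity when h' <= h; only used with h <= h') *)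
Definition Pto (pi : policy) (h h' : nat) (f : S -> A -> R) : S -> A -> R :=
  PchainN pi h (h' - h) f.

(* (T*_h f)(s,a) = r_h(s,a) + E[max_{a'} f(S', a')], S' ~ P_h(.|s,a);
   the max is written as the supremum of the range of f(S', .) *)
Definition Tstar (r : nat -> S -> A -> R) (h : nat) (f : S -> A -> R)
  : S -> A -> R :=
  fun s a => r h s a + Rintegral (P h (s, a)) setT (fun s' => sup (range (f s'))).

(* E_pi[ g(S_h, A_h) ] = \int nu(ds) \int pi_1(da|s) (P^pi_{1->h} g)(s,a) *)
Definition Eh (pi : policy) (h : nat) (g : S -> A -> R) : R :=
  Rintegral nu setT (polE (pi 1%N) (Pto pi 1 h g)).

Definition J (H : nat) (r : nat -> S -> A -> R) (pi : policy) : R :=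
  \sum_(1 <= h < H.+1) Eh pi h (r h).

Definition Delta (H : nat) (r : nat -> S -> A -> R) (fh : nat -> S -> A -> R)
  (pi : policy) (h : nat) : S -> A -> R :=
  fun s a => \sum_(h <= h' < H)
     Pto pi h h' (fun s0 a0 => Tstar r h' (fh h'.+1) s0 a0 - fh h' s0 a0) s a.

Definition PopOK (pi : policy) (h : nat) (f : S -> A -> R) : Prop :=
  (forall s', (pi h.+1 s').-integrable setT (fun a => (f s' a)%:E)) /\
  (forall s a, (P h (s, a)).-integrable setT (fun s' => (polE (pi h.+1) f s')%:E)).

Fixpoint ChainOK (pi : policy) (h k : nat) (f : S -> A -> R) : Prop :=
  match k with
  | 0 => True
  | k'.+1 => ChainOK pi h.+1 k' f /\ PopOK pi h (PchainN pi h.+1 k' f)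
  end.

(* every conditional expectation E_pi[g(S_h,A_h) | S_h0 = s] (1 <= h0 <= h)
   and the expectation E_pi[g(S_h,A_h)] are finite (integrals of integrable
   functions) *)
Definition FinExp (pi : policy) (h : nat) (g : S -> A -> R) : Prop :=
  (forall h0, (1 <= h0 <= h)%N ->
     ChainOK pi h0 (h - h0) g /\
     forall s, (pi h0 s).-integrable setT (fun a => (Pto pi h0 h g s a)%:E)) /\
  nu.-integrable setT (fun s => (polE (pi 1%N) (Pto pi 1 h g) s)%:E).

Definition greedy (H : nat) (fh : nat -> S -> A -> R) (pihat : policy) : Prop :=
  forall h, (1 <= h <= H)%N -> forall s, exists a0,
    (forall a, fh h s a <= fh h s a0) /\
    (forall U, measurable U -> pihat h s U = \d_a0 U).

End MDP.

From HB Require Import structures.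
From mathcomp Require Import all_boot all_order all_algebra.
From mathcomp Require Import all_classical all_reals all_analysis.
From mathcomp Require Import lra.
Set Implicit Arguments. Unset Strict Implicit. Unset Printing Implicit Defensive.
Import Order.TTheory GRing.Theory Num.Theory.
Local Open Scope classical_set_scope.
Local Open Scope ring_scope.

(* Greediness of pihat gives T*_h fh_(h+1) = r_h + P^pihat_h fh_(h+1).  Writing
   r_h through the Bellman residual g_h = T*_h fh_(h+1) - fh_h and using fh_H = r_H,
     J(rho) = sum_h E_rho[g_h] + E_rho[fh_1]
              + sum_h (E_rho[fh_(h+1)] at step h+1 - E_rho[P^pihat_h fh_(h+1)] at step h).
   The last sum vanishes for rho = pihat by the tower property and is nonpositive
   for rho = pi, as is E_pi[fh_1] - E_pihat[fh_1], because pihat maximizes fh.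
   Hence J(pi) - J(pihat) <= sum_h (E_pi[g_h] - E_pihat[g_h]).
   On the other side Delta_h = g_h + P^pi_h Delta_(h+1), and the function
   s |-> Delta_(h+1)(s, pi_(h+1)(s)) ignores the action, so the h-th summand of the
   right-hand side equals E_pihat[Delta_h(S_h, pi_h)] - E_pihat[g_h]
   - E_pihat[Delta_(h+1)(S_(h+1), pi_(h+1))].  This telescopes to
   E_pi[Delta_1] - sum_h E_pihat[g_h] = sum_h (E_pi[g_h] - E_pihat[g_h]). *)

Lemma telescope_sumr_sub (V : zmodType) m n (u g : nat -> V) : (m <= n)%N ->
  \sum_(m <= h < n) (u h - (g h + u h.+1)) = u m - u n - \sum_(m <= h < n) g h.
Proof.
move=> mn; rewrite -[u m - u n]opprB -telescope_sumr // -sumrN -sumrB.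
by apply: eq_bigr => h _; rewrite opprB opprD addrA addrAC.
Qed.

Lemma sumr_split_shift (V : zmodType) n (Rw G F M : nat -> V) : (0 < n)%N ->
  (forall h, (1 <= h < n)%N -> Rw h = G h + F h - M h) ->
  \sum_(1 <= h < n) Rw h + F n =
  \sum_(1 <= h < n) G h + F 1%N + \sum_(1 <= h < n) (F h.+1 - M h).
Proof.
move=> n_gt0 Rw_split.
have shift : \sum_(1 <= h < n) F h + F n = F 1%N + \sum_(1 <= h < n) F h.+1.
  by rewrite -big_nat_recr // big_nat_recl.
rewrite (eq_big_nat _ _ Rw_split) !sumrB big_split /=.
by rewrite addrAC -[_ + _ + F n]addrA shift !addrA.
Qed.

Section Integration.
Context {R : realType}.

Definition commutes_with_Rintegral (op : R -> R -> R) : Prop :=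
  forall d (T : measurableType d) (mu : {measure set T -> \bar R}) (f g : T -> R),
  mu.-integrable setT (fun x => (f x)%:E) ->
  mu.-integrable setT (fun x => (g x)%:E) ->
  mu.-integrable setT (fun x => (op (f x) (g x))%:E) /\
  Rintegral mu setT (fun x => op (f x) (g x)) =
  op (Rintegral mu setT f) (Rintegral mu setT g).

Lemma commutes_with_RintegralD : commutes_with_Rintegral +%R.
Proof.
move=> d T mu f g If Ig; split; last by rewrite RintegralD.
apply: (eq_integrable measurableT _ _ _ (integrableD measurableT If Ig)).
by move=> x _; rewrite /= EFinD.
Qed.

Lemma commutes_with_RintegralB : commutes_with_Rintegral (fun x y => x - y).
Proof.
move=> d T mu f g If Ig; split; last by rewrite RintegralB.
apply: (eq_integrable measurableT _ _ _ (integrableB measurableT If Ig)).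
by move=> x _; rewrite /= EFinB.
Qed.

Lemma Rintegral_big d (T : measurableType d) (mu : {measure set T -> \bar R})
    (l : seq nat) (F : nat -> T -> R) :
  (forall i, i \in l -> mu.-integrable setT (fun x => (F i x)%:E)) ->
  mu.-integrable setT (fun x => (\sum_(i <- l) F i x)%:E) /\
  Rintegral mu setT (fun x => \sum_(i <- l) F i x) =
  \sum_(i <- l) Rintegral mu setT (F i).
Proof.
elim: l => [|i l IH] IF.
  split.
    apply: (eq_integrable measurableT (cst 0%E)); last exact: integrable0.
    by move=> x _; rewrite big_nil.
  by under eq_Rintegral do rewrite big_nil; rewrite big_nil Rintegral_cst // mul0r.
have [Il El] := IH (fun j jl => IF j (mem_behead (s := i :: l) jl)).
have [Ii Ei] := commutes_with_RintegralD (IF i (mem_head i l)) Il.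
split.
  by apply: (eq_integrable measurableT _ _ _ Ii) => x _; rewrite big_cons.
by under eq_Rintegral do rewrite big_cons; rewrite big_cons -El -Ei.
Qed.

Lemma sup_range_max (T : Type) (f : T -> R) t0 :
  (forall t, f t <= f t0) -> sup (range f) = f t0.
Proof.
move=> f_le; apply/le_anti/andP; split.
  by apply: ge_sup; [exists (f t0), t0 | move=> _ [t _ <-]].
by apply: ub_le_sup; [exists (f t0) => _ [t _ <-] | exists t0].
Qed.

Lemma Rintegral_dirac d (T : measurableType d) (mu : {measure set T -> \bar R})
    t0 (g : T -> R) :
  (forall U, measurable U -> mu U = \d_t0 U) -> measurable_fun setT g ->
  Rintegral mu setT g = g t0.
Proof.
move=> mu_dirac mg; rewrite /Rintegral (eq_measure_integral \d_t0).
  rewrite integral_dirac //= ?indicE ?mem_set ?mul1r //.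
  exact/measurable_realfun.measurable_EFinP.
by move=> U mU _; exact: mu_dirac.
Qed.

End Integration.

Section UnitMass.
Context {R : realType} {d : measure_display} {T : measurableType d}.
Variable mu : {measure set T -> \bar R}.
Hypothesis mu1 : mu setT = 1%E.

Lemma integrable_cst_mass1 (c : R) : mu.-integrable setT (fun _ => c%:E).
Proof.
apply/integrableP; split; first exact: measurable_cst.
by rewrite integral_cst // mu1 mule1 ltry.
Qed.

Lemma Rintegral_cst_mass1 (c : R) : Rintegral mu setT (fun _ => c) = c.
Proof. by rewrite Rintegral_cst // mu1 mulr1. Qed.

Lemma Rintegral_le_mass1 (g : T -> R) (c : R) :
  mu.-integrable setT (fun x => (g x)%:E) -> (forall x, g x <= c) ->
  Rintegral mu setT g <= c.
Proof.
move=> Ig g_le; rewrite -[leRHS]Rintegral_cst_mass1.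
by apply: le_Rintegral => //; exact: integrable_cst_mass1.
Qed.

End UnitMass.

Section PolicyEvaluation.
Context {R : realType} {d1 d2 : measure_display}
        {S : measurableType d1} {A : measurableType d2}
        (P : transitions R S A) (nu : probability S R).
Implicit Types (rho : policy R S A) (f g phi : S -> A -> R).

Section Linearity.
Variable op : R -> R -> R.
Hypothesis op_Rintegral : commutes_with_Rintegral op.

Local Notation "f <op> g" := (fun s a => op (f s a) (g s a)) (at level 50).

Lemma PopOK_op rho h f g : PopOK P rho h f -> PopOK P rho h g ->
  PopOK P rho h (f <op> g) /\ Pop P rho h (f <op> g) = Pop P rho h f <op> Pop P rho h g.
Proof.
move=> [If Jf] [Ig Jg].
have polE_op : polE (rho h.+1) (f <op> g) =
               (fun s => op (polE (rho h.+1) f s) (polE (rho h.+1) g s)).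
  by apply: funext => s; exact: (op_Rintegral (If s) (Ig s)).2.
split; first split.
- by move=> s; exact: (op_Rintegral (If s) (Ig s)).1.
- by move=> s a; rewrite polE_op; exact: (op_Rintegral (Jf s a) (Jg s a)).1.
- apply: funext => s; apply: funext => a.
  by rewrite /Pop polE_op (op_Rintegral (Jf s a) (Jg s a)).2.
Qed.

Lemma ChainOK_op rho k : forall h f g,
  ChainOK P rho h k f -> ChainOK P rho h k g ->
  ChainOK P rho h k (f <op> g) /\
  PchainN P rho h k (f <op> g) = PchainN P rho h k f <op> PchainN P rho h k g.
Proof.
elim: k => [|k IH] h f g //= [Cf Of] [Cg Og].
have [C ->] := IH h.+1 f g Cf Cg.
by have [Ofg ->] := PopOK_op Of Og.
Qed.

Lemma FinExp_op rho h f g : (1 <= h)%N ->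
  FinExp P nu rho h f -> FinExp P nu rho h g ->
  FinExp P nu rho h (f <op> g) /\
  Eh P nu rho h (f <op> g) = op (Eh P nu rho h f) (Eh P nu rho h g).
Proof.
move=> h_gt0 [Ff Nf] [Fg Ng].
have Pto_op h0 : (1 <= h0 <= h)%N ->
    Pto P rho h0 h (f <op> g) = Pto P rho h0 h f <op> Pto P rho h0 h g.
  by move=> h0h; exact: (ChainOK_op (Ff h0 h0h).1 (Fg h0 h0h).1).2.
have h1 : (1 <= 1 <= h)%N by rewrite leqnn h_gt0.
have polE_op : polE (rho 1%N) (Pto P rho 1 h (f <op> g)) =
    (fun s => op (polE (rho 1%N) (Pto P rho 1 h f) s)
                 (polE (rho 1%N) (Pto P rho 1 h g) s)).
  apply: funext => s; rewrite Pto_op //.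
  exact: (op_Rintegral ((Ff 1%N h1).2 s) ((Fg 1%N h1).2 s)).2.
split; first split.
- move=> h0 h0h; split; first exact: (ChainOK_op (Ff h0 h0h).1 (Fg h0 h0h).1).1.
  move=> s; rewrite Pto_op //.
  exact: (op_Rintegral ((Ff h0 h0h).2 s) ((Fg h0 h0h).2 s)).1.
- by rewrite polE_op; exact: (op_Rintegral Nf Ng).1.
- by rewrite /Eh polE_op (op_Rintegral Nf Ng).2.
Qed.

End Linearity.

Lemma FinExpD rho h f g : (1 <= h)%N ->
  FinExp P nu rho h f -> FinExp P nu rho h g ->
  FinExp P nu rho h (fun s a => f s a + g s a) /\
  Eh P nu rho h (fun s a => f s a + g s a) = Eh P nu rho h f + Eh P nu rho h g.
Proof. exact: (FinExp_op commutes_with_RintegralD). Qed.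

Lemma FinExpB rho h f g : (1 <= h)%N ->
  FinExp P nu rho h f -> FinExp P nu rho h g ->
  FinExp P nu rho h (fun s a => f s a - g s a) /\
  Eh P nu rho h (fun s a => f s a - g s a) = Eh P nu rho h f - Eh P nu rho h g.
Proof. exact: (FinExp_op commutes_with_RintegralB). Qed.

Lemma PchainN_last rho k : forall h f,
  PchainN P rho h k.+1 f = PchainN P rho h k (Pop P rho (h + k) f).
Proof.
elim: k => [|k IH] h f; first by rewrite addn0.
by rewrite addnS -addSn /= -IH.
Qed.

Lemma ChainOK_last rho k : forall h f,
  ChainOK P rho h k.+1 f <->
  ChainOK P rho h k (Pop P rho (h + k) f) /\ PopOK P rho (h + k) f.
Proof.
elim: k => [|k IH] h f; first by rewrite addn0 /=; tauto.
rewrite addnS -addSn.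
change (ChainOK P rho h.+1 k.+1 f /\ PopOK P rho h (PchainN P rho h.+1 k.+1 f) <->
  (ChainOK P rho h.+1 k (Pop P rho (h.+1 + k) f) /\
   PopOK P rho h (PchainN P rho h.+1 k (Pop P rho (h.+1 + k) f))) /\
  PopOK P rho (h.+1 + k) f).
rewrite PchainN_last; have := IH h.+1 f; tauto.
Qed.

Lemma Pto_id rho h f : Pto P rho h h f = f.
Proof. by rewrite /Pto subnn. Qed.

Lemma PtoSr rho h0 h f : (h0 <= h)%N ->
  Pto P rho h0 h.+1 f = Pto P rho h0 h (Pop P rho h f).
Proof. by move=> h0h; rewrite /Pto subSn // PchainN_last subnKC. Qed.

Lemma PtoSl rho h h' f : (h < h')%N ->
  Pto P rho h h' f = Pop P rho h (Pto P rho h.+1 h' f).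
Proof. by move=> hh'; rewrite /Pto -(subnSK hh'). Qed.

Lemma ChainOK_Sr rho h0 h f : (h0 <= h)%N ->
  ChainOK P rho h0 (h.+1 - h0) f <->
  ChainOK P rho h0 (h - h0) (Pop P rho h f) /\ PopOK P rho h f.
Proof. by move=> h0h; rewrite subSn // ChainOK_last subnKC. Qed.

Lemma ChainOK_Sl rho h h' f : (h < h')%N ->
  ChainOK P rho h (h' - h) f -> PopOK P rho h (Pto P rho h.+1 h' f).
Proof. by move=> hh'; rewrite -(subnSK hh') => -[]. Qed.

Lemma FinExp_Pop rho h f : (1 <= h)%N -> FinExp P nu rho h.+1 f ->
  FinExp P nu rho h (Pop P rho h f) /\
  Eh P nu rho h (Pop P rho h f) = Eh P nu rho h.+1 f.
Proof.
move=> h_gt0 [Ff Nf].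
have Pto1 : Pto P rho 1 h (Pop P rho h f) = Pto P rho 1 h.+1 f by rewrite PtoSr.
split; last by rewrite /Eh Pto1.
split; last by rewrite Pto1.
move=> h0 /andP[h0_gt0 h0h].
have /Ff[C I] : (1 <= h0 <= h.+1)%N by rewrite h0_gt0 leqW.
split; first exact: ((ChainOK_Sr _ _ h0h).1 C).1.
by rewrite -PtoSr.
Qed.

Lemma polE_state (k : R.-pker S ~> A) (v : S -> R) : polE k (fun s _ => v s) = v.
Proof. by apply: funext => s; rewrite /polE Rintegral_cst_mass1 // prob_kernel. Qed.

Lemma Pop_polE rho rho' h phi :
  Pop P rho' h (fun s _ => polE (rho h.+1) phi s) = Pop P rho h phi.
Proof. by rewrite /Pop polE_state. Qed.

Lemma PopOK_polE rho h phi :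
  PopOK P rho h phi -> PopOK P rho h (fun s _ => polE (rho h.+1) phi s).
Proof.
move=> [_ Jphi]; split; last by rewrite polE_state.
by move=> s; apply: integrable_cst_mass1; exact: prob_kernel.
Qed.

Lemma FinExp_PopOK rho h f : (1 <= h)%N -> FinExp P nu rho h.+1 f -> PopOK P rho h f.
Proof. by move=> h_gt0 [/(_ 1%N isT) [/(ChainOK_Sr _ _ h_gt0) []]]. Qed.

Lemma Pop_cst rho h (c : R) : Pop P rho h (fun _ _ => c) = (fun _ _ => c).
Proof.
apply: funext => s; apply: funext => a.
by rewrite /Pop polE_state; apply: Rintegral_cst_mass1; exact: prob_kernel.
Qed.

Lemma PchainN_cst rho k h (c : R) : PchainN P rho h k (fun _ _ => c) = (fun _ _ => c).
Proof. by elim: k h => [|k IH] h //=; rewrite IH Pop_cst. Qed.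

Lemma PopOK_cst rho h (c : R) : PopOK P rho h (fun _ _ => c).
Proof.
split; first by move=> s; apply: integrable_cst_mass1; exact: prob_kernel.
by rewrite polE_state => s a; apply: integrable_cst_mass1; exact: prob_kernel.
Qed.

Lemma ChainOK_cst rho k h (c : R) : ChainOK P rho h k (fun _ _ => c).
Proof.
elim: k h => [|k IH] h //=; rewrite PchainN_cst.
by split; [exact: IH | exact: PopOK_cst].
Qed.

Lemma FinExp_cst rho h (c : R) : FinExp P nu rho h (fun _ _ => c).
Proof.
rewrite /FinExp /Pto; split=> [h0 _|]; rewrite PchainN_cst.
  split=> [|s]; first exact: ChainOK_cst.
  by apply: integrable_cst_mass1; exact: prob_kernel.
by rewrite polE_state; apply: integrable_cst_mass1; exact: probability_setT.
Qed.

Lemma Eh_cst rho h (c : R) : Eh P nu rho h (fun _ _ => c) = c.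
Proof.
rewrite /Eh /Pto PchainN_cst polE_state.
by apply: Rintegral_cst_mass1; exact: probability_setT.
Qed.

Lemma FinExp_polE rho h phi : (1 <= h)%N -> FinExp P nu rho h phi ->
  FinExp P nu rho h (fun s _ => polE (rho h) phi s) /\
  Eh P nu rho h (fun s _ => polE (rho h) phi s) = Eh P nu rho h phi.
Proof.
case: h => [//|h] _ [Fphi Nphi].
pose c := fun s (_ : A) => polE (rho h.+1) phi s.
have Pto_c h0 : (h0 <= h)%N -> Pto P rho h0 h.+1 c = Pto P rho h0 h.+1 phi.
  by move=> h0h; rewrite !(PtoSr _ _ h0h) /c Pop_polE.
have polE_c h0 : (h0 <= h.+1)%N ->
    polE (rho h0) (Pto P rho h0 h.+1 c) = polE (rho h0) (Pto P rho h0 h.+1 phi).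
  rewrite leq_eqVlt ltnS => /predU1P[->|h0h]; last by rewrite Pto_c.
  by rewrite !Pto_id /c polE_state.
split; last by rewrite /Eh polE_c.
split; last by rewrite polE_c.
move=> h0 /andP[h0_gt0]; rewrite leq_eqVlt ltnS => /predU1P[->|h0h].
  rewrite subnn Pto_id; split=> // s.
  by apply: integrable_cst_mass1; exact: prob_kernel.
have /Fphi[C I] : (1 <= h0 <= h.+1)%N by rewrite h0_gt0 leqW.
split; last by move=> s; rewrite Pto_c.
have [C' O'] := (ChainOK_Sr _ _ h0h).1 C.
by apply/(ChainOK_Sr _ _ h0h); rewrite /c Pop_polE; split; last exact: PopOK_polE.
Qed.

Lemma PchainN_ge0 rho k h f : (forall s a, 0 <= f s a) ->
  forall s a, 0 <= PchainN P rho h k f s a.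
Proof.
elim: k h => [|k IH] h f_ge0 s a //=.
by apply: Rintegral_ge0 => s' _; apply: Rintegral_ge0 => a' _; exact: IH.
Qed.

Lemma Eh_ge0 rho h f : (forall s a, 0 <= f s a) -> 0 <= Eh P nu rho h f.
Proof.
move=> f_ge0; apply: Rintegral_ge0 => s _; apply: Rintegral_ge0 => a _.
exact: PchainN_ge0.
Qed.

Lemma Pop_big rho h (l : seq nat) (F : nat -> S -> A -> R) :
  (forall i, i \in l -> PopOK P rho h (F i)) ->
  Pop P rho h (fun s a => \sum_(i <- l) F i s a) =
  (fun s a => \sum_(i <- l) Pop P rho h (F i) s a).
Proof.
move=> OF; apply: funext => s; apply: funext => a.
have polE_big : polE (rho h.+1) (fun s a => \sum_(i <- l) F i s a) =
    (fun s' => \sum_(i <- l) polE (rho h.+1) (F i) s').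
  by apply: funext => s'; exact: (Rintegral_big (fun i il => (OF i il).1 s')).2.
by rewrite /Pop polE_big; exact: (Rintegral_big (fun i il => (OF i il).2 s a)).2.
Qed.

End PolicyEvaluation.

Section PerformanceDifference.
Context {R : realType} {d1 d2 : measure_display}
        {S : measurableType d1} {A : measurableType d2}
        (H : nat) (P : transitions R S A) (nu : probability S R)
        (r fh : nat -> S -> A -> R) (pihat pi : policy R S A).
Hypotheses (H_gt0 : (0 < H)%N) (fhH : fh H = r H)
           (pihat_greedy : greedy H fh pihat).
Hypothesis fin_values : forall rho, rho = pi \/ rho = pihat ->
  forall h, (1 <= h <= H)%N -> FinExp P nu rho h (r h) /\ FinExp P nu rho h (fh h).
Hypothesis fin_Tstar : forall rho, rho = pi \/ rho = pihat ->
  forall h, (1 <= h < H)%N -> FinExp P nu rho h (Tstar P r h (fh h.+1)).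
Hypothesis chain_residual : forall h h', (1 <= h <= h')%N -> (h' < H)%N ->
  ChainOK P pi h (h' - h) (fun s a => Tstar P r h' (fh h'.+1) s a - fh h' s a).
Hypothesis fin_advantage : forall h, (1 <= h < H)%N ->
  FinExp P nu pihat h (fun s _ =>
    polE (pi h) (Delta P H r fh pi h) s - polE (pihat h) (Delta P H r fh pi h) s).

Local Notation E := (Eh P nu).

Let pi_in : pi = pi \/ pi = pihat := or_introl erefl.
Let pihat_in : pihat = pi \/ pihat = pihat := or_intror erefl.
Let ltn_leq h : (1 <= h < H)%N -> (1 <= h <= H)%N.
Proof. by case/andP=> -> /ltnW. Qed.
Let ltn_leqS h : (1 <= h < H)%N -> (1 <= h.+1 <= H)%N.
Proof. by case/andP. Qed.

Definition residual h : S -> A -> R :=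
  fun s a => Tstar P r h (fh h.+1) s a - fh h s a.

Lemma integrable_fh rho : rho = pi \/ rho = pihat -> forall h s, (1 <= h <= H)%N ->
  (rho h s).-integrable setT (fun a => (fh h s a)%:E).
Proof.
move=> rho_in h s hH; have /andP[h_gt0 _] := hH.
have /(fin_values rho_in hH).2.1[_ /(_ s)] : (1 <= h <= h)%N by rewrite h_gt0 leqnn.
by rewrite Pto_id.
Qed.

Lemma polE_greedy h s : (1 <= h <= H)%N ->
  exists2 a0, (forall a, fh h s a <= fh h s a0) & polE (pihat h) (fh h) s = fh h s a0.
Proof.
move=> hH; have [a0 [a0_max pihat_dirac]] := pihat_greedy hH s.
exists a0 => //; apply: Rintegral_dirac pihat_dirac _.
apply/measurable_realfun.measurable_EFinP.
exact: measurable_int (integrable_fh pihat_in s hH).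
Qed.

Lemma polE_pihat_sup h s : (1 <= h <= H)%N ->
  polE (pihat h) (fh h) s = sup (range (fh h s)).
Proof.
by move=> hH; have [a0 a0_max ->] := polE_greedy s hH; rewrite (sup_range_max a0_max).
Qed.

Lemma polE_pi_le_pihat h s : (1 <= h <= H)%N ->
  polE (pi h) (fh h) s <= polE (pihat h) (fh h) s.
Proof.
move=> hH; have [a0 a0_max ->] := polE_greedy s hH.
apply: (Rintegral_le_mass1 _ (integrable_fh pi_in s hH) a0_max).
exact: prob_kernel.
Qed.

Lemma Tstar_greedy h : (1 <= h < H)%N ->
  Tstar P r h (fh h.+1) = (fun s a => r h s a + Pop P pihat h (fh h.+1) s a).
Proof.
move=> hH; apply: funext => s; apply: funext => a; rewrite /Tstar /Pop.
by congr (_ + _); apply: eq_Rintegral => s' _; apply/esym/polE_pihat_sup/ltn_leqS.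
Qed.

Lemma FinExp_residual rho : rho = pi \/ rho = pihat -> forall h, (1 <= h < H)%N ->
  FinExp P nu rho h (residual h) /\
  E rho h (residual h) = E rho h (Tstar P r h (fh h.+1)) - E rho h (fh h).
Proof.
move=> rho_in h hH; apply: FinExpB; first by case/andP: hH.
  exact: fin_Tstar.
exact: (fin_values rho_in (ltn_leq hH)).2.
Qed.

Lemma Eh_Tstar_greedy rho : rho = pi \/ rho = pihat -> forall h, (1 <= h < H)%N ->
  FinExp P nu rho h (Pop P pihat h (fh h.+1)) /\
  E rho h (Tstar P r h (fh h.+1)) = E rho h (r h) + E rho h (Pop P pihat h (fh h.+1)).
Proof.
move=> rho_in h hH; have /andP[h_gt0 _] := hH.
have Fr := (fin_values rho_in (ltn_leq hH)).1.
have [FPop _] := FinExpB h_gt0 (fin_Tstar rho_in hH) Fr.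
have Pop_eq : (fun s a => Tstar P r h (fh h.+1) s a - r h s a) = Pop P pihat h (fh h.+1).
  by rewrite Tstar_greedy //; apply: funext => s; apply: funext => a; rewrite addrC addKr.
rewrite Pop_eq in FPop; split=> //.
by rewrite [in LHS]Tstar_greedy //; exact: (FinExpD h_gt0 Fr FPop).2.
Qed.

Lemma J_decomposition rho : rho = pi \/ rho = pihat ->
  J P nu H r rho =
  \sum_(1 <= h < H) E rho h (residual h) + E rho 1 (fh 1%N) +
  \sum_(1 <= h < H) (E rho h.+1 (fh h.+1) - E rho h (Pop P pihat h (fh h.+1))).
Proof.
move=> rho_in; rewrite /J big_nat_recr //= -fhH.
apply: (sumr_split_shift (G := fun h => E rho h (residual h))
         (F := fun h => E rho h (fh h))
         (M := fun h => E rho h (Pop P pihat h (fh h.+1)))) => // h hH.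
by rewrite (FinExp_residual rho_in hH).2 (Eh_Tstar_greedy rho_in hH).2 subrK addrK.
Qed.

Lemma J_pihat :
  J P nu H r pihat = \sum_(1 <= h < H) E pihat h (residual h) + E pihat 1 (fh 1%N).
Proof.
rewrite (J_decomposition pihat_in) -[RHS]addr0; congr (_ + _).
rewrite big_nat big1 // => h hH.
have /andP[h_gt0 _] := hH.
by rewrite (FinExp_Pop h_gt0 (fin_values pihat_in (ltn_leqS hH)).2).2 subrr.
Qed.

Lemma Pop_pi_le_pihat h s a : (1 <= h < H)%N ->
  Pop P pi h (fh h.+1) s a <= Pop P pihat h (fh h.+1) s a.
Proof.
move=> hH; have /andP[h_gt0 _] := hH.
apply: le_Rintegral => //.
- exact: (FinExp_PopOK h_gt0 (fin_values pi_in (ltn_leqS hH)).2).2.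
- exact: (FinExp_PopOK h_gt0 (fin_values pihat_in (ltn_leqS hH)).2).2.
- by move=> s' _; exact: polE_pi_le_pihat (ltn_leqS hH).
Qed.

Lemma J_pi_le :
  J P nu H r pi <= \sum_(1 <= h < H) E pi h (residual h) + E pi 1 (fh 1%N).
Proof.
rewrite (J_decomposition pi_in) gerDl big_nat; apply: sumr_le0 => h hH.
have /andP[h_gt0 _] := hH.
have [FPop <-] := FinExp_Pop h_gt0 (fin_values pi_in (ltn_leqS hH)).2.
rewrite subr_le0 -subr_ge0 -(FinExpB h_gt0 (Eh_Tstar_greedy pi_in hH).1 FPop).2.
by apply: Eh_ge0 => s a; rewrite subr_ge0 Pop_pi_le_pihat.
Qed.

Lemma Eh_fh1_le : E pi 1 (fh 1%N) <= E pihat 1 (fh 1%N).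
Proof.
have H1 : (1 <= 1 <= H)%N by rewrite H_gt0.
have := (fin_values pi_in H1).2.2; have := (fin_values pihat_in H1).2.2.
rewrite /Eh !Pto_id => N2 N1.
by apply: le_Rintegral => // s _; exact: polE_pi_le_pihat.
Qed.

Lemma J_gap_le : J P nu H r pi - J P nu H r pihat <=
  \sum_(1 <= h < H) E pi h (residual h) - \sum_(1 <= h < H) E pihat h (residual h).
Proof. by have := J_pi_le; have := Eh_fh1_le; rewrite J_pihat; lra. Qed.

Lemma DeltaE h : Delta P H r fh pi h =
  (fun s a => \sum_(h <= h' < H) Pto P pi h h' (residual h') s a).
Proof. by []. Qed.

Definition Delta_pi h : S -> A -> R := fun s _ => polE (pi h) (Delta P H r fh pi h) s.

Definition advantage h : S -> A -> R :=
  fun s _ => polE (pi h) (Delta P H r fh pi h) s - polE (pihat h) (Delta P H r fh pi h) s.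

Lemma Delta_rec h : (1 <= h < H)%N -> Delta P H r fh pi h =
  (fun s a => residual h s a + Pop P pi h (Delta P H r fh pi h.+1) s a).
Proof.
move=> hH; have /andP[h_gt0 hltH] := hH.
apply: funext => s; apply: funext => a.
rewrite /Delta big_ltn // Pto_id; congr (_ + _).
rewrite Pop_big; last first.
  move=> i; rewrite mem_index_iota => /andP[hi iH].
  have hih : (1 <= h <= i)%N by rewrite h_gt0 ltnW.
  exact: ChainOK_Sl hi (chain_residual hih iH).
by apply: eq_big_nat => i /andP[hi _]; rewrite PtoSl.
Qed.

Lemma Delta_pi_H : Delta_pi H = (fun _ _ => 0).
Proof.
have Delta_H : Delta P H r fh pi H = (fun _ _ => 0).
  by apply: funext => s; apply: funext => a; rewrite /Delta big_geq.
by rewrite /Delta_pi Delta_H polE_state.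
Qed.

Lemma Eh_Delta h : (1 <= h < H)%N -> FinExp P nu pihat h.+1 (Delta_pi h.+1) ->
  FinExp P nu pihat h (Delta P H r fh pi h) /\
  E pihat h (Delta P H r fh pi h) = E pihat h (residual h) + E pihat h.+1 (Delta_pi h.+1).
Proof.
move=> hH FDelta; have /andP[h_gt0 _] := hH.
have [FPop <-] := FinExp_Pop h_gt0 FDelta.
(* Delta_pi h.+1 ignores the action, so it may be integrated against pihat h.+1
   instead of pi h.+1, which makes the tower property under pihat applicable. *)
rewrite Delta_rec // -(Pop_polE _ _ pihat).
exact: FinExpD h_gt0 (FinExp_residual pihat_in hH).1 FPop.
Qed.

Lemma FinExp_Delta_pi h : (1 <= h <= H)%N -> FinExp P nu pihat h (Delta_pi h).
Proof.
case/andP=> h_gt0 /subnKC; move: (H - h)%N => n.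
elim: n h h_gt0 => [|n IH] h h_gt0 hn.
  by rewrite addn0 in hn; rewrite hn Delta_pi_H; exact: FinExp_cst.
have hH : (1 <= h < H)%N by rewrite h_gt0 -hn addnS ltnS leq_addr.
have [FDelta _] := Eh_Delta hH (IH h.+1 isT (etrans (addSnnS h n) hn)).
have [FpolE _] := FinExp_polE h_gt0 FDelta.
have [FD _] := FinExpD (f := advantage h) h_gt0 (fin_advantage hH) FpolE.
suff -> : Delta_pi h =
    (fun s a => advantage h s a + polE (pihat h) (Delta P H r fh pi h) s).
  exact: FD.
by apply: funext => s; apply: funext => a; rewrite subrK.
Qed.

Lemma Eh_advantage h : (1 <= h < H)%N ->
  E pihat h (advantage h) = E pihat h (Delta_pi h) - E pihat h (Delta P H r fh pi h).
Proof.
move=> hH; have /andP[h_gt0 _] := hH.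
have [FDelta _] := Eh_Delta hH (FinExp_Delta_pi (ltn_leqS hH)).
have [FpolE EpolE] := FinExp_polE h_gt0 FDelta.
apply: etrans (FinExpB h_gt0 (FinExp_Delta_pi (ltn_leq hH)) FpolE).2 _.
by rewrite EpolE.
Qed.

Lemma Eh_Delta_pi1 : E pihat 1 (Delta_pi 1) = \sum_(1 <= h < H) E pi h (residual h).
Proof.
have int_pi1 s h : h \in index_iota 1 H ->
    (pi 1%N s).-integrable setT (fun a => (Pto P pi 1 h (residual h) s a)%:E).
  rewrite mem_index_iota => hH; have h1 : (1 <= 1 <= h)%N by case/andP: hH => ->.
  exact: ((FinExp_residual pi_in hH).1.1 1%N h1).2.
have int_nu h : h \in index_iota 1 H ->
    nu.-integrable setT (fun s => (polE (pi 1%N) (Pto P pi 1 h (residual h)) s)%:E).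
  by rewrite mem_index_iota => hH; exact: (FinExp_residual pi_in hH).1.2.
have polE_Delta : polE (pi 1%N) (Delta P H r fh pi 1) =
    (fun s => \sum_(1 <= h < H) polE (pi 1%N) (Pto P pi 1 h (residual h)) s).
  by apply: funext => s; rewrite DeltaE; exact: (Rintegral_big (int_pi1 s)).2.
rewrite /Eh Pto_id /Delta_pi polE_state polE_Delta.
exact: (Rintegral_big int_nu).2.
Qed.

Lemma sum_advantage : \sum_(1 <= h < H) E pihat h (advantage h) =
  \sum_(1 <= h < H) E pi h (residual h) - \sum_(1 <= h < H) E pihat h (residual h).
Proof.
have E_advantage h : (1 <= h < H)%N -> E pihat h (advantage h) =
    E pihat h (Delta_pi h) - (E pihat h (residual h) + E pihat h.+1 (Delta_pi h.+1)).
  move=> hH; rewrite Eh_advantage //; congr (_ - _).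
  exact: (Eh_Delta hH (FinExp_Delta_pi (ltn_leqS hH))).2.
apply: etrans (eq_big_nat _ _ E_advantage) _.
rewrite (telescope_sumr_sub (fun h => E pihat h (Delta_pi h))) //.
by rewrite Eh_Delta_pi1 Delta_pi_H Eh_cst subr0.
Qed.

End PerformanceDifference.

Theorem lemma2 (R : realType) (d1 d2 : measure_display)
  (S : measurableType d1) (A : measurableType d2)
  (H : nat) (P : transitions R S A) (nu : probability S R)
  (r : nat -> S -> A -> R) (fh : nat -> S -> A -> R)
  (pihat pi : policy R S A) :
  (2 <= H)%N ->
  fh H = r H ->
  greedy H fh pihat ->
  (* all expectations are finite: *)
  (forall h, (1 <= h < H)%N -> forall s a,
     (P h (s, a)).-integrable setT (fun s' => (sup (range (fh h.+1 s')))%:E)) ->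
  (forall rho, rho = pi \/ rho = pihat -> forall h, (1 <= h <= H)%N ->
     FinExp P nu rho h (r h) /\ FinExp P nu rho h (fh h)) ->
  (forall rho, rho = pi \/ rho = pihat -> forall h, (1 <= h < H)%N ->
     FinExp P nu rho h (Tstar P r h (fh h.+1))) ->
  (forall h h', (1 <= h <= h')%N -> (h' < H)%N ->
     ChainOK P pi h (h' - h)
       (fun s a => Tstar P r h' (fh h'.+1) s a - fh h' s a)) ->
  (forall h, (1 <= h < H)%N -> forall s,
     (pi h s).-integrable setT (fun a => (Delta P H r fh pi h s a)%:E) /\
     (pihat h s).-integrable setT (fun a => (Delta P H r fh pi h s a)%:E)) ->
  (forall h, (1 <= h < H)%N ->
     FinExp P nu pihat h (fun s _ =>
       polE (pi h) (Delta P H r fh pi h) s - polE (pihat h) (Delta P H r fh pi h) s)) ->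
  J P nu H r pi - J P nu H r pihat <=
  \sum_(1 <= h < H)
     Eh P nu pihat h (fun s _ =>
       polE (pi h) (Delta P H r fh pi h) s - polE (pihat h) (Delta P H r fh pi h) s).
Proof.
move=> H_ge2 fhH pihat_greedy _ fin_values fin_Tstar chain_residual _ fin_advantage.
have H_gt0 : (0 < H)%N := ltnW H_ge2.
rewrite (sum_advantage H_gt0 fin_values fin_Tstar chain_residual fin_advantage).
exact: J_gap_le H_gt0 fhH pihat_greedy fin_values fin_Tstar.
Qed.
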